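(* Let $\lambda$ be a regular cardinal and let $\mathcal{K}$ be a $\lambda$-accessible category. If $\mathcal{K}$ has an object that is not $(<\lambda)$-presentable and $\mathcal{K}$ has no proper $(\lambda,<\lambda)$-systems, then $\mathcal{K}$ has an object of presentability rank $\lambda$.
   Context: For a regular cardinal $\kappa$, a poset is $\kappa$-directed if every subset of size $<\kappa$ has an upper bound; a $\kappa$-directed diagram/colimit is one indexed by such a poset. An object $M$ is $\kappa$-presentable if $\mathrm{Hom}(M,-)$ preserves $\kappa$-directed colimits; $M$ is $(<\lambda)$-presentable if it is $\kappa$-presentable for some regular $\kappa < \lambda+\aleph_1$; the presentability rank of $M$ is the least regular $\kappa$ with $M$ $\kappa$-presentable. A $(\mu,<\lambda)$-system is a $\mu$-directed diagram $\langle M_i : i \in I\rangle$ of $(<\lambda)$-presentable objects; if it has colimit $M$ with colimit maps $f_i : M_i \to M$, it is proper if there is no $i \in I$ and morphism $g : M \to M_i$ with $f_i g = \mathrm{id}_M$. A category is $\lambda$-accessible if it has $\lambda$-directed colimits, has up to isomorphism only a set of $\lambda$-presentable objects, and every object is a $\lambda$-directed colimit of $\lambda$-presentable objects. *)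

Definition card_le (A B : Type) : Prop :=
  exists f : A -> B, forall x y, f x = f y -> x = y.
Definition card_lt (A B : Type) : Prop := card_le A B /\ ~ card_le B A.

Definition regular (K : Type) : Prop :=
  card_le nat K /\
  forall (I : Type) (F : I -> Type),
    card_lt I K -> (forall i, card_lt (F i) K) -> card_lt {i : I & F i} K.

(** kappa < lambda + aleph_1  (cardinal sum = max(lambda, aleph_1)),
    i.e. kappa < lambda or kappa < aleph_1 (= kappa countable). *)
Definition lt_plus_aleph1 (K L : Type) : Prop := card_lt K L \/ card_le K nat.

Record Category := {
  Ob :> Type;
  Hom : Ob -> Ob -> Type;
  idm : forall A, Hom A A;
  comp : forall {A B C}, Hom B C -> Hom A B -> Hom A C;
  comp_idl : forall A B (f : Hom A B), comp (idm B) f = f;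
  comp_idr : forall A B (f : Hom A B), comp f (idm A) = f;
  comp_assoc : forall A B C D (f : Hom C D) (g : Hom B C) (h : Hom A B),
      comp f (comp g h) = comp (comp f g) h }.
Arguments Hom {c} _ _.
Arguments idm {c} _.
Arguments comp {c A B C} _ _.

Definition is_iso {C : Category} (A B : C) : Prop :=
  exists (u : Hom A B) (v : Hom B A), comp u v = idm B /\ comp v u = idm A.

Definition directed (K : Type) {I : Type} (le : I -> I -> Prop) : Prop :=
  (forall i, le i i) /\
  (forall i j k, le i j -> le j k -> le i k) /\
  (forall i j, le i j -> le j i -> i = j) /\
  (forall (J : Type) (s : J -> I), card_lt J K -> exists u, forall j, le (s j) u).

Record Diagram (C : Category) (I : Type) (le : I -> I -> Prop) := {
  dob : I -> Ob C;
  dmap : forall {i j}, le i j -> Hom (dob i) (dob j);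
  dmap_id : forall i (h : le i i), dmap h = idm (dob i);
  dmap_comp : forall i j k (h1 : le i j) (h2 : le j k) (h3 : le i k),
      comp (dmap h2) (dmap h1) = dmap h3 }.
Arguments Diagram : clear implicits.
Arguments dob {C I le} _ _.
Arguments dmap {C I le} _ {i j} _.

Definition is_cocone {C : Category} {I : Type} {le : I -> I -> Prop}
  (D : Diagram C I le) {M : C} (f : forall i, Hom (dob D i) M) : Prop :=
  forall i j (h : le i j), comp (f j) (dmap D h) = f i.

Definition is_colimit {C : Category} {I : Type} {le : I -> I -> Prop}
  (D : Diagram C I le) {M : C} (f : forall i, Hom (dob D i) M) : Prop :=
  is_cocone D f /\
  forall (N : C) (g : forall i, Hom (dob D i) N), is_cocone D g ->
    exists u : Hom M N, (forall i, comp u (f i) = g i) /\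
      forall u' : Hom M N, (forall i, comp u' (f i) = g i) -> u' = u.

(** * kappa-presentable objects: Hom(M,-) preserves kappa-directed colimits,
    i.e. the canonical map colim_i Hom(M, D i) -> Hom(M, colim D) is a
    bijection (written out via the description of directed colimits of sets). *)
Definition presentable {C : Category} (K : Type) (M : C) : Prop :=
  forall (I : Type) (le : I -> I -> Prop) (D : Diagram C I le)
         (L : C) (f : forall i, Hom (dob D i) L),
    directed K le -> is_colimit D f ->
    (forall h : Hom M L, exists i (g : Hom M (dob D i)), comp (f i) g = h) /\
    (forall i j (g : Hom M (dob D i)) (g' : Hom M (dob D j)),
        comp (f i) g = comp (f j) g' ->
        exists k (hik : le i k) (hjk : le j k),
          comp (dmap D hik) g = comp (dmap D hjk) g').

Definition lt_presentable {C : Category} (L : Type) (M : C) : Prop :=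
  exists K : Type, regular K /\ lt_plus_aleph1 K L /\ presentable K M.

Definition has_rank {C : Category} (M : C) (L : Type) : Prop :=
  regular L /\ presentable L M /\
  forall K : Type, regular K -> presentable K M -> card_le L K.

Definition accessible (C : Category) (L : Type) : Prop :=
  (forall (I : Type) (le : I -> I -> Prop) (D : Diagram C I le),
      directed L le -> exists (M : C) (f : forall i, Hom (dob D i) M),
        is_colimit D f) /\
  (exists (S : Type) (F : S -> Ob C),
      (forall s, presentable L (F s)) /\
      forall M : C, presentable L M -> exists s, is_iso M (F s)) /\
  (forall M : C, exists (I : Type) (le : I -> I -> Prop) (D : Diagram C I le)
                        (f : forall i, Hom (dob D i) M),
      directed L le /\ (forall i, presentable L (dob D i)) /\ is_colimit D f).

Definition is_system {C : Category} (Mu L : Type) {I : Type}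
  {le : I -> I -> Prop} (D : Diagram C I le) : Prop :=
  directed Mu le /\ forall i, lt_presentable L (dob D i).

Definition proper_with {C : Category} {I : Type} {le : I -> I -> Prop}
  (D : Diagram C I le) {M : C} (f : forall i, Hom (dob D i) M) : Prop :=
  is_colimit D f /\
  ~ exists i (g : Hom M (dob D i)), comp (f i) g = idm M.

Definition no_proper_systems (C : Category) (Mu L : Type) : Prop :=
  forall (I : Type) (le : I -> I -> Prop) (D : Diagram C I le)
         (M : C) (f : forall i, Hom (dob D i) M),
    is_system Mu L D -> ~ proper_with D f.

(** The object of rank [L] is found among the [L]-presentable pieces of a
    canonical [L]-directed presentation of an object [M0] that is not
    [(<L)]-presentable.  If all pieces were [(<L)]-presentable they would form
    an [(L,<L)]-system, which by hypothesis is not proper, so [M0] would be a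
    retract of one of them and hence [(<L)]-presentable itself.  So some piece
    [N] is [L]-presentable but not [(<L)]-presentable; as cardinals are
    comparable (Zorn), every regular [K] with [N] [K]-presentable satisfies
    [L <= K], i.e. [N] has presentability rank [L]. *)

From mathcomp Require Import ssreflect ssrfun ssrbool boolp classical_sets.

Local Open Scope classical_set_scope.

Lemma chain_common_member {T : Type} {F : set (set T)} {p q : T} :
  total_on F subset -> (\bigcup_(X in F) X) p -> (\bigcup_(X in F) X) q ->
  exists2 X, F X & X p /\ X q.
Proof.
move=> Ftot [X FX Xp] [Y FY Yq].
have [XY|YX] := Ftot _ _ FX FY.
- by exists Y => //; split=> //; apply: XY.
- by exists X => //; split=> //; apply: YX.
Qed.

Section CardinalComparability.
Variables A B : Type.

Definition partial_injection (G : set (A * B)) : Prop :=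
  (forall a b b', G (a, b) -> G (a, b') -> b = b') /\
  (forall a a' b, G (a, b) -> G (a', b) -> a = a').

Lemma partial_injection_bigcup (F : set (set (A * B))) :
  F `<=` partial_injection -> total_on F subset ->
  partial_injection (\bigcup_(G in F) G).
Proof.
move=> FP Ftot; split.
- move=> a b b' Hb Hb'.
  have [G FG [Gb Gb']] := chain_common_member Ftot Hb Hb'.
  exact: (FP G FG).1 Gb Gb'.
- move=> a a' b Ha Ha'.
  have [G FG [Ga Ga']] := chain_common_member Ftot Ha Ha'.
  exact: (FP G FG).2 Ga Ga'.
Qed.

Lemma partial_injection_setU1 (G : set (A * B)) (a0 : A) (b0 : B) :
  partial_injection G -> (forall b, ~ G (a0, b)) -> (forall a, ~ G (a, b0)) ->
  partial_injection (G `|` [set (a0, b0)]).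
Proof.
move=> [Gfun Ginj] a0_free b0_free; split.
- move=> a b b' [Gb|[Ea Eb]] [Gb'|[Ea' Eb']]; subst.
  + exact: Gfun Gb Gb'.
  + by case: (a0_free b).
  + by case: (a0_free b').
  + by [].
- move=> a a' b [Ga|[Ea Eb]] [Ga'|[Ea' Eb']]; subst.
  + exact: Ginj Ga Ga'.
  + by case: (b0_free a).
  + by case: (b0_free a').
  + by [].
Qed.

Lemma card_le_total : card_le A B \/ card_le B A.
Proof.
have [G [[Gfun Ginj] Gmax]] := Zorn_bigcup partial_injection_bigcup.
have [A_covered|] := pselect (forall a, exists b, G (a, b)).
  left; exists (fun a => sval (cid (A_covered a))) => x y.
  case: (cid (A_covered x)) => b1 Gx; case: (cid (A_covered y)) => b2 Gy /= E.
  by rewrite E in Gx; exact: Ginj Gx Gy.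
have [B_covered|] := pselect (forall b, exists a, G (a, b)).
  right; exists (fun b => sval (cid (B_covered b))) => x y.
  case: (cid (B_covered x)) => a1 Gx; case: (cid (B_covered y)) => a2 Gy /= E.
  by rewrite E in Gx; exact: Gfun Gx Gy.
move=> /existsNP[b0 /forallNP b0_free] /existsNP[a0 /forallNP a0_free].
exfalso; apply: (Gmax (G `|` [set (a0, b0)])).
  split; first by move=> p Gp; left.
  by move=> /(_ (a0, b0) (or_intror erefl)) /a0_free.
exact: partial_injection_setU1.
Qed.

End CardinalComparability.

Section Presentability.
Context {C : Category}.

Lemma presentable_retract {K : Type} {P M : C} (r : Hom P M) (s : Hom M P) :
  comp r s = idm M -> presentable K P -> presentable K M.
Proof.
move=> rs P_pres I le D N f D_dir f_colim.
have [factor essential] := P_pres I le D N f D_dir f_colim; split.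
- move=> h; have [i [g fg]] := factor (comp h r).
  exists i, (comp g s).
  by rewrite comp_assoc fg -comp_assoc rs comp_idr.
- move=> i j g g' E.
  have [k [hik [hjk Ek]]] : exists k (hik : le i k) (hjk : le j k),
      comp (dmap D hik) (comp g r) = comp (dmap D hjk) (comp g' r).
    by apply: essential; rewrite !comp_assoc E.
  exists k, hik, hjk.
  have := congr1 (fun u => comp u s) Ek.
  by rewrite -!comp_assoc rs !comp_idr.
Qed.

Lemma lt_presentable_retract {L : Type} {P M : C} (r : Hom P M) (s : Hom M P) :
  comp r s = idm M -> lt_presentable L P -> lt_presentable L M.
Proof.
move=> rs [K [K_reg [KL P_pres]]].
by exists K; split=> //; split=> //; exact: presentable_retract rs P_pres.
Qed.

Lemma colimit_retract_of_system {Mu L I : Type} {le : I -> I -> Prop}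
    {D : Diagram C I le} {M : C} {f : forall i, Hom (dob D i) M} :
  no_proper_systems C Mu L -> is_system Mu L D -> is_colimit D f ->
  exists i (g : Hom M (dob D i)), comp (f i) g = idm M.
Proof.
move=> no_proper D_sys f_colim.
have [//|not_retract] := pselect (exists i (g : Hom M (dob D i)), comp (f i) g = idm M).
by case: (no_proper I le D M f D_sys).
Qed.

Lemma has_rank_of_not_lt_presentable {L : Type} {M : C} :
  regular L -> presentable L M -> ~ lt_presentable L M -> has_rank M L.
Proof.
move=> L_reg M_pres M_not_lt; split=> //; split=> // K K_reg M_K_pres.
have [//|KL] := card_le_total L K.
have [//|not_LK] := pselect (card_le L K).
by case: M_not_lt; exists K; split=> //; split=> //; left.
Qed.

Lemma exists_presentable_not_lt_presentable {L : Type} :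
  accessible C L -> no_proper_systems C L L -> (exists M : C, ~ lt_presentable L M) ->
  exists N : C, presentable L N /\ ~ lt_presentable L N.
Proof.
move=> [_ [_ presentation]] no_proper [M M_not_lt].
have [I [le [D [f [D_dir [D_pres f_colim]]]]]] := presentation M.
have [all_lt|] := pselect (forall i, lt_presentable L (dob D i)).
  have [i [g fg]] := colimit_retract_of_system no_proper (conj D_dir all_lt) f_colim.
  by case: M_not_lt; exact: lt_presentable_retract fg (all_lt i).
by move=> /existsNP[i Di_not_lt]; exists (dob D i).
Qed.

End Presentability.

Theorem lemma6p1 (L : Type) (C : Category) :
  regular L ->
  accessible C L ->
  (exists M : C, ~ lt_presentable L M) ->
  no_proper_systems C L L ->
  exists M : C, has_rank M L.
Proof.
move=> L_reg C_acc not_lt no_proper.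
have [N [N_pres N_not_lt]] :=
  exists_presentable_not_lt_presentable C_acc no_proper not_lt.
by exists N; exact: has_rank_of_not_lt_presentable.
Qed.
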